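(* Let $w$ be an infinite word and $n,n',n''$ non-negative integers with $n'\le n''\le n+n'$. Assume the prefixes of $w$ of lengths $n$, $n'$, $n''$ are palindromes, denoted $a$, $a'$, $a''$ respectively, and let $a_0$ be the prefix of $w$ of length $n+n'-n''$. Then: (1) there is a word $b$ such that $a=a_0b$ and $a''=a'b$; (2) if $n''\ge n-n'$, then $a_0$ is a palindrome.
   Context: Infinite words are right-infinite sequences of letters; a finite word is a palindrome if it equals its reversal, the empty word being a palindrome. *)

From mathcomp Require Import all_boot.
Set Implicit Arguments. Unset Strict Implicit. Unset Printing Implicit Defensive.

Definition infword (A : Type) := nat -> A.

Definition wprefix (A : Type) (w : infword A) (n : nat) : seq A := mkseq w n.

Definition palindrome (A : Type) (s : seq A) : Prop := rev s = s.

(* Write [k = n'' - n'] and [m = n + n' - n''], so that [n = m + k] and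
   [n'' = n' + k].  If a prefix [x ++ y] of [w] is a palindrome, then its
   suffix [y] is the reversal of the prefix of [w] of length [size y]; hence
   [a] and [a''] both end with [b], the reversal of the prefix of length [k].
   Reading the same fact on [a = (prefix k) ++ _] and [a'' = (prefix k) ++ _]
   shows that [rev a0] and [a'] both start at position [k] of [w], so [a0]
   and its reversal share a prefix of length [min m n'].  When [m <= 2 n'],
   which is the hypothesis [n - n' <= n''], every position of [a0] or its
   mirror image lies in that common prefix, so [a0] is a palindrome. *)

From mathcomp Require Import all_boot.
From mathcomp Require Import zify.

Set Implicit Arguments.
Unset Strict Implicit.
Unset Printing Implicit Defensive.

Lemma palindrome_take_rev (A : Type) (s : seq A) p :
  size s <= p.*2 -> take p (rev s) = take p s -> palindrome s.
Proof.
rewrite /palindrome; case Es: s => [//|x0 s0]; rewrite -Es => le_s_2p eq_take.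
apply: (eq_from_nth (x0 := x0)); first by rewrite size_rev.
move=> i; rewrite size_rev => lt_i_s.
have nth_rev_take j : j < p -> nth x0 (rev s) j = nth x0 s j.
  by move=> lt_j_p; rewrite -(nth_take x0 lt_j_p) eq_take nth_take.
have [lt_i_p|le_p_i] := ltnP i p; first exact: nth_rev_take.
rewrite nth_rev // -nth_rev_take; last lia.
by rewrite nth_rev; [congr nth; lia | lia].
Qed.

Definition wdrop (A : Type) (k : nat) (w : infword A) : infword A :=
  fun i => w (k + i).

Lemma size_wprefix (A : Type) (w : infword A) n : size (wprefix w n) = n.
Proof. exact: size_mkseq. Qed.

Lemma wprefixD (A : Type) (w : infword A) p q :
  wprefix w (p + q) = wprefix w p ++ wprefix (wdrop p w) q.
Proof.
rewrite /wprefix /mkseq iotaD map_cat add0n; congr (_ ++ _).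
by rewrite -[p in iota p]addn0 iotaDl -map_comp.
Qed.

Lemma take_wprefix (A : Type) (w : infword A) p n :
  p <= n -> take p (wprefix w n) = wprefix w p.
Proof. by move=> le_p_n; rewrite -map_take take_iota (minn_idPl le_p_n). Qed.

Lemma palindrome_wprefixD (A : Type) (w : infword A) p q :
  palindrome (wprefix w (p + q)) -> wprefix (wdrop p w) q = rev (wprefix w q).
Proof.
move=> pal; have := congr1 (take q) pal.
rewrite {1}wprefixD rev_cat take_size_cat ?size_rev ?size_wprefix //.
by rewrite take_wprefix ?leq_addl // => <-; rewrite revK.
Qed.

Theorem lemma5p2 (A : Type) (w : infword A) (n n' n'' : nat) :
  n' <= n'' <= n + n' ->
  palindrome (wprefix w n) ->
  palindrome (wprefix w n') ->
  palindrome (wprefix w n'') ->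
  (exists b : seq A,
      wprefix w n = wprefix w (n + n' - n'') ++ b /\
      wprefix w n'' = wprefix w n' ++ b) /\
  (n - n' <= n'' -> palindrome (wprefix w (n + n' - n''))).
Proof.
move=> /andP[le_n'_n'' le_n''_nn'] pal pal' pal''.
set m := n + n' - n''; set k := n'' - n'.
have def_n : n = m + k by lia.
have def_n'' : n'' = n' + k by lia.
split.
  exists (rev (wprefix w k)).
  rewrite {1}def_n {1}def_n'' !wprefixD.
  by rewrite !palindrome_wprefixD -?def_n -?def_n''.
move=> le_n_n'n''; set p := minn m n'.
have rev_a0 : wprefix (wdrop k w) m = rev (wprefix w m).
  by apply: palindrome_wprefixD; rewrite addnC -def_n.
have shift_a' : wprefix (wdrop k w) n' = wprefix w n'.
  by rewrite palindrome_wprefixD ?pal' // addnC -def_n''.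
apply: (@palindrome_take_rev _ _ p); first by rewrite size_wprefix; lia.
rewrite -rev_a0 !take_wprefix ?geq_minl //.
by rewrite -(take_wprefix _ (geq_minr m n')) shift_a' take_wprefix ?geq_minr.
Qed.
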